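(* For positive integers $m,n$: $\chi_{ei}(F_{m,n})=1$ if $m=1$ and $n=2$; $\chi_{ei}(F_{m,n})=m+1$ if $m\ge 2$ and $n=2$; and $\chi_{ei}(F_{m,n})=m+n$ if either $m=1$ and $n\ge 4$, or $m\ge 2$ and $n\ge 3$.
   Context: All graphs are finite and simple. The fan graph $F_{m,n}$ is the join $\overline{K}_m\vee P_n$ of the edgeless graph on $m$ vertices and the path on $n$ vertices, i.e. the disjoint union of these two graphs together with all edges between them. A path $P_4$ in $G$ is a sequence $uxyv$ of four distinct vertices with $ux,xy,yv\in E(G)$; $u,v$ are its end vertices. An $e$-injective $k$-coloring of $G$ is a function $f:V(G)\to\{1,\dots,k\}$ with $f(u)\ne f(v)$ whenever $u,v$ are the end vertices of some path $P_4$ in $G$; $\chi_{ei}(G)$ is the least such $k$. *)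

From mathcomp Require Import all_boot.
Set Implicit Arguments. Unset Strict Implicit. Unset Printing Implicit Defensive.

(* Vertex set of the fan F_{m,n}: inl i = the i-th vertex of the edgeless part
   \overline{K}_m, inr j = the j-th vertex of the path P_n (path 0-1-...-(n-1)). *)
Definition fan_vertex (m n : nat) : finType := ('I_m + 'I_n)%type.

Definition fan_adj (m n : nat) : rel (fan_vertex m n) :=
  fun u v =>
    match u, v with
    | inl _, inl _ => false
    | inl _, inr _ => true
    | inr _, inl _ => true
    | inr i, inr j => (i.+1 == j :> nat) || (j.+1 == i :> nat)
    end.

Definition P4_ends (T : finType) (e : rel T) (u v : T) : Prop :=
  exists x y : T, uniq [:: u; x; y; v] /\ e u x /\ e x y /\ e y v.

(* f : T -> {1..k} (modelled as 'I_k) is an e-injective k-coloring. *)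
Definition einj_coloring (T : finType) (e : rel T) (k : nat) (f : T -> 'I_k) : Prop :=
  forall u v : T, P4_ends e u v -> f u <> f v.

Definition has_einj_coloring (T : finType) (e : rel T) (k : nat) : Prop :=
  exists f : T -> 'I_k, einj_coloring e f.

Definition chi_ei_is (T : finType) (e : rel T) (c : nat) : Prop :=
  has_einj_coloring e c /\ (forall k, has_einj_coloring e k -> c <= k).

From mathcomp Require Import all_boot zify.
Set Implicit Arguments. Unset Strict Implicit. Unset Printing Implicit Defensive.

(* The two ends of a P4 are distinct, so an e-injective coloring is injective
   on every set of vertices that are pairwise ends of P4s, whereas an injective
   coloring is always e-injective.  In F_{m,n} with n >= 3 and either m >= 2 or
   n >= 4, any two distinct vertices are the ends of a P4, hence
   chi_ei = m + n.  For n = 2 the two path vertices are never the ends of a P4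
   (both inner vertices would have to be apex vertices, which are not
   adjacent), so they can share a color, while the m apex vertices and one path
   vertex are pairwise ends of P4s: chi_ei = m + 1.  Finally F_{1,2} is a
   triangle, which contains no P4 at all. *)

Section EInjectiveColoring.

Variables (T : finType) (e : rel T).

Lemma P4_ends_neq u v : P4_ends e u v -> u != v.
Proof. by case=> x [y [+ _]]; rewrite /= !inE => /and4P[/norP[_ /norP[_]]]. Qed.

Lemma P4_ends_sym : symmetric e -> forall u v, P4_ends e u v -> P4_ends e v u.
Proof.
move=> e_sym u v [x [y [uniq_uxyv [ux [xy yv]]]]]; exists y, x.
by rewrite -rev_uniq e_sym yv e_sym xy e_sym ux.
Qed.

Lemma P4_ends_card u v : P4_ends e u v -> 3 < #|T|.
Proof.
case=> x [y [uniq_uxyv _]].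
by have := max_card (mem [:: u; x; y; v]); rewrite (card_uniqP uniq_uxyv).
Qed.

Lemma has_einj_coloring_card : has_einj_coloring e #|T|.
Proof. by exists enum_rank => u v /P4_ends_neq /eqP uv /enum_rank_inj. Qed.

Lemma has_einj_coloring_gt0 k : T -> has_einj_coloring e k -> 0 < k.
Proof. by move=> x [f _]; apply: leq_ltn_trans (ltn_ord (f x)). Qed.

Lemma has_einj_coloring_card_le (A : finType) (g : A -> T) k :
  (forall a b, a != b -> P4_ends e (g a) (g b)) ->
  has_einj_coloring e k -> #|A| <= k.
Proof.
move=> gP [f fP]; rewrite -[k]card_ord; apply: (leq_card (f \o g)) => a b /= fab.
by apply/eqP; apply: contraT => /gP /fP.
Qed.

Lemma chi_ei_card : (forall u v, u != v -> P4_ends e u v) -> chi_ei_is e #|T|.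
Proof.
move=> all_P4; split=> [|k]; first exact: has_einj_coloring_card.
exact: has_einj_coloring_card_le id k all_P4.
Qed.

Lemma chi_ei_small : T -> #|T| <= 3 -> chi_ei_is e 1.
Proof.
move=> x card_le3; split=> [|k]; last exact: has_einj_coloring_gt0.
by exists (fun=> ord0) => u v /P4_ends_card; rewrite ltnNge card_le3.
Qed.

End EInjectiveColoring.

Lemma card_fan_vertex m n : #|fan_vertex m n| = m + n.
Proof. by rewrite card_sum !card_ord. Qed.

Lemma exists_other_ltn k x : 1 < k -> exists2 y, y < k & y != x.
Proof. by move=> k_gt1; exists (x == 0); case: x => [|x] /=; lia. Qed.

Section Fan.

(* Both parts are nonempty; writing their sizes as successors makes inord usable. *)
Variables m' n' : nat.
Local Notation m := m'.+1.
Local Notation n := n'.+1.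
Local Notation T := (fan_vertex m n).
Local Notation e := (@fan_adj m n).

Lemma fan_adj_sym : symmetric e.
Proof. by case=> [i|j] [k|l] //=; rewrite orbC. Qed.

(* Turns distinctness of vertices into linear arithmetic on their indices. *)
Definition fan_index (u : T) : nat :=
  match u with inl i => i | inr j => m + j end.

Lemma fan_index_inj : injective fan_index.
Proof.
case=> [i|j] [k|l] /=.
- by move/val_inj->.
- by have := ltn_ord i; lia.
- by have := ltn_ord k; lia.
- by move/addnI/val_inj->.
Qed.

Lemma fan_P4_ends (u x y v : T) :
  uniq [:: fan_index u; fan_index x; fan_index y; fan_index v] ->
  e u x -> e x y -> e y v -> P4_ends e u v.
Proof.
by rewrite -[[:: fan_index _; _; _; _]]/(map _ [:: u; x; y; v]) (map_inj_uniq fan_index_inj);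
  exists x, y.
Qed.

Definition apex k : T := inl (inord k).
Definition rim k : T := inr (inord k).

Lemma fan_index_apex k : k < m -> fan_index (apex k) = k.
Proof. by move=> k_lt_m; rewrite /= inordK. Qed.

Lemma fan_index_rim k : k < n -> fan_index (rim k) = m + k.
Proof. by move=> k_lt_n; rewrite /= inordK. Qed.

Lemma rim_val (j : 'I_n) : rim j = inr j.
Proof. by rewrite /rim inord_val. Qed.

Lemma fan_adj_rim j k : j < n -> k < n -> e (rim j) (rim k) = (j.+1 == k) || (k.+1 == j).
Proof. by move=> j_lt_n k_lt_n; rewrite /= !inordK. Qed.

Local Ltac fan_arith :=
  rewrite ?fan_index_apex ?fan_index_rim ?fan_adj_rim //= ?inE; lia.

Lemma P4_ends_apex_apex (i k : 'I_m) : 1 < n -> i != k -> P4_ends e (inl i) (inl k).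
Proof.
move=> n_gt1; rewrite -val_eqE /= => ik.
have i_lt_m := ltn_ord i; have k_lt_m := ltn_ord k.
by apply: (@fan_P4_ends _ (rim 0) (rim 1)); fan_arith.
Qed.

Lemma P4_ends_apex_rim (i : 'I_m) (j : 'I_n) :
  1 < m -> 1 < n -> P4_ends e (inl i) (inr j).
Proof.
move=> m_gt1 n_gt1; have i_lt_m := ltn_ord i; have j_lt_n := ltn_ord j.
have [i' i'_lt_m i'_neq] := exists_other_ltn i m_gt1.
have [j' j'_lt_n j'_neq] := exists_other_ltn j n_gt1.
rewrite -rim_val; by apply: (@fan_P4_ends _ (rim j') (apex i')); fan_arith.
Qed.

Lemma P4_ends_apex_long_rim (i : 'I_m) (j : 'I_n) : 3 < n -> P4_ends e (inl i) (inr j).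
Proof.
move=> n_gt3; have i_lt_m := ltn_ord i; have j_lt_n := ltn_ord j; rewrite -rim_val.
have [j_low | j_high] := ltnP j.+2 n.
- by apply: (@fan_P4_ends _ (rim j.+2) (rim j.+1)); fan_arith.
- by apply: (@fan_P4_ends _ (rim (j - 2)) (rim j.-1)); fan_arith.
Qed.

Lemma P4_ends_rim_rim (j l : 'I_n) : 2 < n -> j < l -> P4_ends e (inr j) (inr l).
Proof.
move=> n_gt2 jl; have l_lt_n := ltn_ord l; rewrite -!rim_val.
have [l_far | l_next] := ltnP j.+1 l.
  by apply: (@fan_P4_ends _ (apex 0) (rim l.-1)); fan_arith.
have [l_inner | l_last] := ltnP l.+1 n.
  by apply: (@fan_P4_ends _ (apex 0) (rim l.+1)); fan_arith.
by apply: (@fan_P4_ends _ (rim j.-1) (apex 0)); fan_arith.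
Qed.

Lemma fan_P4_ends_all (u v : T) : 2 < n -> 1 < m \/ 3 < n -> u != v -> P4_ends e u v.
Proof.
move=> n_gt2 m_gt1_or_n_gt3.
have apex_rim i j : P4_ends e (inl i) (inr j).
  case: m_gt1_or_n_gt3 => [m_gt1|n_gt3];
    [apply: P4_ends_apex_rim => //; lia | exact: P4_ends_apex_long_rim].
case: u v => [i|j] [k|l] uv.
- by apply: P4_ends_apex_apex; [lia | apply: contra_neq uv => ->].
- exact: apex_rim.
- exact/(P4_ends_sym fan_adj_sym)/apex_rim.
- case: (ltngtP j l) => [jl | lj | /val_inj jl]; last by rewrite jl eqxx in uv.
    exact: P4_ends_rim_rim.
  exact/(P4_ends_sym fan_adj_sym)/P4_ends_rim_rim.
Qed.

Lemma short_rim_not_P4_ends (j l : 'I_n) : n <= 2 -> ~ P4_ends e (inr j) (inr l).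
Proof.
move=> n_le2 [x [y [+ [ux [xy yv]]]]].
rewrite -(map_inj_uniq fan_index_inj) /= !inE.
have := ltn_ord j; have := ltn_ord l.
by case: x y ux xy yv => [a|a] [b|b] //= _ _ _; have := ltn_ord a; have := ltn_ord b; lia.
Qed.

Definition short_rim_coloring (u : T) : 'I_m.+1 :=
  if u is inl i then widen_ord (leqnSn m) i else ord_max.

Lemma einj_short_rim_coloring : n <= 2 -> einj_coloring e short_rim_coloring.
Proof.
move=> n_le2 [i|j] [k|l] uv; apply/eqP; rewrite -val_eqE /=.
- by apply: contra_neq (P4_ends_neq uv) => /val_inj ->.
- by rewrite neq_ltn ltn_ord.
- by rewrite neq_ltn ltn_ord orbT.
- by case: (short_rim_not_P4_ends n_le2 uv).
Qed.

Lemma chi_ei_fan_short_rim : 1 < m -> n = 2 -> chi_ei_is e m.+1.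
Proof.
move=> m_gt1 n_eq2; split=> [|k].
  by exists short_rim_coloring; apply: einj_short_rim_coloring; rewrite n_eq2.
pose g (o : option 'I_m) : T := if o is Some i then inl i else inr ord0.
have <- : #|{: option 'I_m}| = m.+1 by rewrite card_option card_ord.
apply: (has_einj_coloring_card_le (g := g)).
case=> [a|] [b|] //= ab.
- by apply: P4_ends_apex_apex; [rewrite n_eq2 | apply: contra_neq ab => ->].
- by apply: P4_ends_apex_rim; rewrite ?n_eq2.
- by apply/(P4_ends_sym fan_adj_sym)/P4_ends_apex_rim; rewrite ?n_eq2.
Qed.

End Fan.

Theorem proposition3p8 (m n : nat) : 0 < m -> 0 < n ->
  (m = 1 -> n = 2 -> chi_ei_is (@fan_adj m n) 1) /\
  (2 <= m -> n = 2 -> chi_ei_is (@fan_adj m n) m.+1) /\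
  ((m = 1 /\ 4 <= n) \/ (2 <= m /\ 3 <= n) -> chi_ei_is (@fan_adj m n) (m + n)).
Proof.
case: m => // m' _; case: n => // n' _; split; [|split].
- move=> [->] [->]; apply: chi_ei_small; first exact: inl ord0.
  by rewrite card_fan_vertex.
- exact: chi_ei_fan_short_rim.
- move=> large; rewrite -card_fan_vertex; apply: chi_ei_card => u v.
  by apply: fan_P4_ends_all; lia.
Qed.
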